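(* Let $n\ge 3$ and $m,k\ge1$ be integers, let $t\in\mathbb{Z}_n\setminus\{0\}$ with $t^2\equiv t\pmod n$, and let $G$ be the set of all $m\times k$ matrices over $\mathbb{Z}_n$ with the operation $[a_{ij}]*[b_{ij}]=[(t a_{ij}+t b_{ij})\bmod n]$. Then $(G,* )$ is a $T^3$-AG-groupoid.
   Context: An AG-groupoid is a set with a binary operation satisfying $(a*b)*c=(c*b)*a$ for all $a,b,c$. An AG-groupoid $G$ is a $T_l^3$-AG-groupoid if for all $a,b,c\in G$, $a*b=a*c$ implies $b*a=c*a$; it is a $T_r^3$-AG-groupoid if for all $a,b,c\in G$, $b*a=c*a$ implies $a*b=a*c$; and it is a $T^3$-AG-groupoid if it is both $T_l^3$ and $T_r^3$. (The groupoid above is the ''type-II'' AG-groupoid of matrices: the operation $tA+uB \pmod n$ with $u=t\neq0$ and $t^2\equiv u \pmod n$.) *)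

From mathcomp Require Import all_boot all_order all_algebra.
Set Implicit Arguments. Unset Strict Implicit. Unset Printing Implicit Defensive.
Import GRing.Theory.
Local Open Scope ring_scope.

Definition is_AG_groupoid (G : Type) (op : G -> G -> G) : Prop :=
  forall a b c : G, op (op a b) c = op (op c b) a.

Definition is_Tl3 (G : Type) (op : G -> G -> G) : Prop :=
  is_AG_groupoid op /\ forall a b c : G, op a b = op a c -> op b a = op c a.

Definition is_Tr3 (G : Type) (op : G -> G -> G) : Prop :=
  is_AG_groupoid op /\ forall a b c : G, op b a = op c a -> op a b = op a c.

Definition is_T3 (G : Type) (op : G -> G -> G) : Prop :=
  is_Tl3 op /\ is_Tr3 op.

Definition typeII_op (n m k : nat) (t : 'Z_n) (A B : 'M['Z_n]_(m, k))
  : 'M['Z_n]_(m, k) :=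
  \matrix_(i, j) (t * A i j + t * B i j).

From mathcomp Require Import all_boot all_order all_algebra.
Local Open Scope ring_scope.
Import GRing.Theory.

(* The operation t A + t B is commutative, and in a commutative groupoid the
   T^3 cancellation conditions hold trivially, since a*b and b*a coincide.
   The AG law follows from t^2 = t: both sides of (A*B)*C = (C*B)*A equal
   t A + t B + t C entrywise. *)

Lemma commutative_AG_T3 (G : Type) (op : G -> G -> G) :
  commutative op -> is_AG_groupoid op -> is_T3 op.
Proof.
move=> opC opAG.
by split; split=> // a b c; rewrite !(opC a).
Qed.

Section TypeII.

Variables (n m k : nat) (t : 'Z_n).

Lemma typeII_opC : commutative (@typeII_op n m k t).
Proof. by move=> A B; apply/matrixP=> i j; rewrite !mxE addrC. Qed.

Lemma typeII_op_AG : t * t = t -> is_AG_groupoid (@typeII_op n m k t).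
Proof.
move=> tt A B C; apply/matrixP=> i j; rewrite !mxE !mulrDr !mulrA tt.
by rewrite addrC [t * A i j + _]addrC addrA.
Qed.

End TypeII.

Theorem mainTheorem4 (n m k : nat) (t : 'Z_n) :
  (3 <= n)%N -> (1 <= m)%N -> (1 <= k)%N ->
  t != 0 -> t * t = t ->
  is_T3 (@typeII_op n m k t).
Proof.
move=> _ _ _ _ tt.
exact: commutative_AG_T3 (@typeII_opC n m k t) (@typeII_op_AG n m k t tt).
Qed.
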